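(* Let $(q_{i,j})_{i,j\in\mathbb Z^{\geq 0}}$ be the infinite array of non-negative integers defined greedily (row by row, and within each row by increasing $j$) by $$q_{i,j}=\operatorname{mex}\Big(\{q_{i,k}+q_{l,j}-q_{l,k}\mid 0\leq l<i,\ 0\leq k<j\}\cap\mathbb Z^{\geq 0}\Big),$$ and let $q_j=q_{2,j}$. Then the sequence $(q_j)_{j\in\mathbb Z^{\geq 0}}$ is a permutation of $\mathbb Z^{\geq 0}$, and every integer appears exactly once in the sequence $(q_j-j)_{j\in\mathbb Z^{\geq 0}}$.
   Context: $\mathbb Z^{\geq 0}=\{0,1,2,\dots\}$. For $X\subseteq\mathbb Z^{\ge0}$, $\operatorname{mex}(X)=\min(\mathbb Z^{\geq 0}\setminus X)$, with $\operatorname{mex}(\emptyset)=0$. (Row $0$ of the array is identically $0$ and row $1$ is $q_{1,j}=j$.) *)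

From mathcomp Require Import all_boot all_order all_algebra.
Set Implicit Arguments. Unset Strict Implicit. Unset Printing Implicit Defensive.
Import GRing.Theory Num.Theory.

(* Since s has at most (size s) distinct
   elements, some m <= size s is missing, so searching iota 0 (size s).+1
   finds the least missing value (find returns an index, equal to the value). *)
Definition mex (s : seq nat) : nat :=
  find (fun m => m \notin s) (iota 0 (size s).+1).

(* Given the previous rows [prev] (rows 0..i-1, as full functions) and the
   already computed prefix [s] = [q_{i,0}; ...; q_{i,j-1}] of row i, the set
   { q_{i,k} + q_{l,j} - q_{l,k} | l < i, k < j } ∩ Z>=0, as a seq nat. *)
Definition cands (prev : seq (nat -> nat)) (s : seq nat) (j : nat) : seq nat :=
  [seq `|v|%N | v <- [seq ((nth 0%N s k)%:Z + (r j)%:Z - (r k)%:Z)%R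
                      | r <- prev, k <- iota 0 j] & (0 <= v)%R].

Fixpoint row_prefix (prev : seq (nat -> nat)) (n : nat) : seq nat :=
  match n with
  | 0 => [::]
  | n'.+1 => let s := row_prefix prev n' in rcons s (mex (cands prev s n'))
  end.

Definition new_row (prev : seq (nat -> nat)) : nat -> nat :=
  fun j => nth 0%N (row_prefix prev j.+1) j.

Fixpoint rows (i : nat) : seq (nat -> nat) :=
  match i with
  | 0 => [::]
  | i'.+1 => rcons (rows i') (new_row (rows i'))
  end.

Definition qarr (i j : nat) : nat := nth (fun _ => 0%N) (rows i.+1) i j.

Definition qseq (j : nat) : nat := qarr 2 j.

From mathcomp Require Import all_boot all_order all_algebra zify.
From Stdlib Require Import Classical.
Set Implicit Arguments. Unset Strict Implicit. Unset Printing Implicit Defensive.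
Import GRing.Theory Num.Theory.

(* Row 0 vanishes and row 1 is the identity, so q_j is the least value that is
   neither an earlier q_k nor an earlier diagonal, i.e. q_j - j <> q_k - k for
   k < j.  If a value n never occurred, then from some index B on every step J
   would skip n only because the diagonal n - J is already used; these
   infinitely many diagonals would all be used at indices below B.  If a
   diagonal d never occurred, split [0, N) into the indices above and below
   it.  Above it every value k + d is taken earlier, which bounds the total
   excess of q_k - k over d by O((|d| + 1) N); as q is injective its sum
   dominates that of the indices, so the total deficit below is bounded
   likewise.  The excesses (deficits) are distinct, so both parts have
   O(sqrt((|d| + 1) N)) elements, which is absurd for N large. *)

Lemma inj_eventually_ge (f : nat -> nat) :
  injective f -> forall n, exists B, forall k, B <= k -> n <= f k.
Proof.
move=> f_inj; elim=> [|n [B large]]; first by exists 0.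
have ne_n k : B <= k -> f k != n -> n < f k.
  by move=> le_Bk; rewrite ltn_neqAle eq_sym large // andbT.
case: (classic (exists2 k0, B <= k0 & f k0 = n)) => [[k0 le_Bk0 fk0] | none].
- exists (maxn B k0.+1) => k; rewrite geq_max => /andP[le_Bk lt_k0k]; apply: ne_n => //.
  by apply: contraTneq lt_k0k => fk; rewrite (f_inj k0 k) ?ltnn // fk0 fk.
- by exists B => k le_Bk; apply: ne_n => //; apply/eqP => fk; apply: none; exists k.
Qed.

Lemma inj_surj_bijective (f : nat -> nat) :
  injective f -> (forall n, exists j, f j = n) -> bijective f.
Proof.
move=> f_inj f_surj.
have pre n : exists j, f j == n by have [j <-] := f_surj n; exists j.
exists (fun n => xchoose (pre n)) => [j | n]; last exact/eqP/(xchooseP (pre n)).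
by apply: f_inj; apply/eqP/(xchooseP (pre (f j))).
Qed.

Lemma bin2_size_le_sum_uniq (s : seq nat) :
  uniq s -> 'C(size s, 2) <= \sum_(x <- s) x.
Proof.
move Hn : (size s) => n; elim: n s Hn => [|n IH] s size_s uniq_s; first by rewrite bin0n.
have [x x_s le_nx] : exists2 x, x \in s & n <= x.
  apply/hasP; apply: contraT => /hasPn small.
  have : size s <= size (iota 0 n).
    by apply: uniq_leq_size => // y /small; rewrite mem_iota -ltnNge.
  by rewrite size_s size_iota ltnn.
rewrite (perm_big _ (perm_to_rem x_s)) big_cons binS bin1 addnC leq_add //.
by apply: IH; rewrite ?rem_uniq // size_rem // size_s.
Qed.

Lemma sum_iota_le_sum_inj (f : nat -> nat) N :
  injective f -> \sum_(0 <= k < N) k <= \sum_(0 <= k < N) f k.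
Proof.
move=> f_inj; rewrite bin2_sum -(big_map f predT id).
have := @bin2_size_le_sum_uniq (map f (index_iota 0 N)).
by rewrite size_map size_iota subn0 map_inj_uniq ?iota_uniq //; apply.
Qed.

Lemma sum_inj_image_le (s : seq nat) (g : nat -> nat) (c M : nat) :
  uniq s -> {in s &, injective g} ->
  {in s, forall x, c <= x -> x \in map g s} -> {in s, forall x, g x <= M} ->
  \sum_(x <- s) g x <= \sum_(x <- s) x + c * M.
Proof.
move=> uniq_s g_inj g_cover g_le.
set large := [seq x <- s | c <= x].
have uniq_gs : uniq (map g s) by rewrite map_inj_in_uniq.
have perm_large : perm_eq [seq y <- map g s | y \in large] large.
  apply: uniq_perm; rewrite ?filter_uniq // => y.
  by rewrite mem_filter andb_idr // mem_filter => /andP[le_cy y_s]; apply: g_cover.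
rewrite -(big_map g predT id) (bigID (mem large)) /= -big_filter.
rewrite (perm_big _ perm_large) leq_add //.
  by rewrite big_filter [leqRHS](bigID (fun x => c <= x)) leq_addr.
have small_count : count (predC (mem large)) (map g s) <= c.
  have := count_predC (mem large) (map g s); rewrite -size_filter (perm_size perm_large).
  rewrite size_map size_filter -(count_predC (fun x => c <= x) s) => /addnI ->.
  rewrite -size_filter -[leqRHS](size_iota 0) uniq_leq_size ?filter_uniq // => x.
  by rewrite mem_filter mem_iota /= -ltnNge => /andP[].
apply: (@leq_trans (count (predC (mem large)) (map g s) * M)).
  rewrite -sum1_count big_distrl /= big_seq_cond [leqRHS]big_seq_cond.
  by apply: leq_sum => y /andP[/mapP[x x_s ->] _]; rewrite mul1n g_le.
by rewrite leq_mul2r small_count orbT.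
Qed.

Lemma sqr_add_le_bin2 t u :
  (t + u) * (t + u) <= 4 * ('C(t, 2) + 'C(u, 2)) + 2 * (t + u).
Proof.
have := (nat_Cauchy t u).1; rewrite !expnS !expn0 !muln1.
have := mul_bin_diag t 1; have := mul_bin_diag u 1; rewrite !bin1.
by case: t => [|t]; case: u => [|u] /=; nia.
Qed.

Section GreedyPermutation.

Variable f : nat -> nat.
Hypothesis f_fresh : forall j k, k < j -> f j <> f k /\ f j + k <> f k + j.
Hypothesis f_least :
  forall j v, v < f j -> exists2 k, k < j & v = f k \/ v + k = f k + j.

Lemma greedy_inj : injective f.
Proof.
move=> i j eq_f; case: (ltngtP i j) => // [lt_ij | lt_ji].
- by case: (f_fresh lt_ij); rewrite eq_f.
- by case: (f_fresh lt_ji); rewrite eq_f.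
Qed.

Lemma greedy_diag_inj i j : f i + j = f j + i -> i = j.
Proof.
move=> eq_d; case: (ltngtP i j) => // [lt_ij | lt_ji].
- by case: (f_fresh lt_ij) => _ []; lia.
- by case: (f_fresh lt_ji) => _ []; lia.
Qed.

Lemma greedy_le_double j : f j <= 2 * j.
Proof.
have cover : {subset iota 0 (f j) <=
                     [seq f k | k <- iota 0 j] ++ [seq f k + j - k | k <- iota 0 j]}.
  move=> v; rewrite mem_iota => /f_least[k lt_kj [-> | eq_v]]; rewrite mem_cat; apply/orP.
  - by left; apply/map_f; rewrite mem_iota.
  - by right; apply/mapP; exists k; rewrite ?mem_iota //; lia.
have := uniq_leq_size (iota_uniq 0 (f j)) cover.
by rewrite size_cat !size_map !size_iota addnn -mul2n.
Qed.

Lemma greedy_surj n : exists j, f j = n.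
Proof.
apply: NNPP => missing.
have [B large] := inj_eventually_ge greedy_inj n.
have above J : B <= J -> n < f J.
  move=> le_BJ; rewrite ltn_neqAle large // andbT.
  by apply/eqP => eq_n; apply: missing; exists J.
have blocked J : B <= J -> exists2 k, k < J & n + k = f k + J.
  move=> le_BJ; have [k lt_kJ [eq_n | eq_d]] := f_least (above J le_BJ); last by exists k.
  by case: missing; exists k.
have diag_gt J : B <= J -> n + J < f J + B.
  move=> le_BJ; rewrite ltnNge; apply/negP => le_fB.
  have [|k lt_k eq_k] := blocked (n + J - f J); first lia.
  have lt_kJ : k < J by have := above J le_BJ; lia.
  by case: (f_fresh lt_kJ) => _ []; lia.
have : {subset iota B B.+1 <= [seq n + k - f k | k <- iota 0 B]}.
  move=> J; rewrite mem_iota => /andP[le_BJ _]; have [k lt_kJ eq_k] := blocked J le_BJ.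
  apply/mapP; exists k; last lia.
  by rewrite mem_iota /= ltnNge; apply/negP => /diag_gt; lia.
by move/(uniq_leq_size (iota_uniq _ _)); rewrite size_map !size_iota ltnn.
Qed.

Section MissingDiagonal.

Variables a b : nat.
Hypothesis diag_missing : forall k, f k + b != k + a.
Variable N : nat.

Definition above := [seq k <- index_iota 0 N | k + a < f k + b].
Definition below := [seq k <- index_iota 0 N | f k + b < k + a].

Lemma mem_above k : (k \in above) = (k < N) && (k + a < f k + b).
Proof. by rewrite mem_filter mem_index_iota andbC. Qed.

Lemma mem_below k : (k \in below) = (k < N) && (f k + b < k + a).
Proof. by rewrite mem_filter mem_index_iota andbC. Qed.

Lemma sum_above_below (F : nat -> nat) :
  \sum_(0 <= k < N) F k = \sum_(k <- above) F k + \sum_(k <- below) F k.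
Proof.
rewrite (bigID (fun k => k + a < f k + b)) /= !big_filter; congr (_ + _).
by apply: eq_bigl => k; rewrite -leqNgt leq_eqVlt (negbTE (diag_missing k)).
Qed.

Lemma size_above_below : size above + size below = N.
Proof. by have := sum_above_below (fun=> 1); rewrite !sum1_size size_iota subn0. Qed.

Lemma bin2_size_above :
  'C(size above, 2) <= \sum_(k <- above) (f k + b - (k + a)).
Proof.
have := @bin2_size_le_sum_uniq [seq f k + b - (k + a) | k <- above].
rewrite size_map big_map; apply.
rewrite map_inj_in_uniq ?filter_uniq ?iota_uniq // => x y.
by rewrite !mem_above => /andP[_ ?] /andP[_ ?] eq_x; apply: greedy_diag_inj; lia.
Qed.

Lemma bin2_size_below :
  'C(size below, 2) <= \sum_(k <- below) (k + a - (f k + b)).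
Proof.
have := @bin2_size_le_sum_uniq [seq k + a - (f k + b) | k <- below].
rewrite size_map big_map; apply.
rewrite map_inj_in_uniq ?filter_uniq ?iota_uniq // => x y.
by rewrite !mem_below => /andP[_ ?] /andP[_ ?] eq_x; apply: greedy_diag_inj; lia.
Qed.

Lemma sum_excess_above :
  \sum_(k <- above) (f k + b - (k + a)) <= b * (2 * N + b).
Proof.
have g_inj : {in above &, injective (fun k => f k + b - a)}.
  move=> x y; rewrite !mem_above => /andP[_ ?] /andP[_ ?] eq_g.
  by apply: greedy_inj; lia.
have g_cover : {in above, forall x, b <= x -> x \in [seq f k + b - a | k <- above]}.
  move=> x; rewrite mem_above => /andP[lt_xN lt_x] le_bx.
  have [|k lt_kx [eq_v | eq_d]] := @f_least x (x + a - b); first lia.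
  - apply/mapP; exists k; last lia.
    by rewrite mem_above; apply/andP; split; lia.
  - by have /eqP := diag_missing k; lia.
have g_le : {in above, forall x, f x + b - a <= 2 * N + b}.
  by move=> x; rewrite mem_above => /andP[lt_xN _]; have := greedy_le_double x; lia.
have := @sum_inj_image_le above _ _ _ (filter_uniq _ (iota_uniq _ _)) g_inj g_cover g_le.
have -> : \sum_(k <- above) (f k + b - a) =
          \sum_(k <- above) (f k + b - (k + a)) + \sum_(k <- above) k.
  rewrite -big_split /=; apply: eq_big_seq => k.
  by rewrite mem_above => /andP[_ ?]; lia.
lia.
Qed.

Lemma sum_deficit_below :
  \sum_(k <- below) (k + a - (f k + b)) <=
  \sum_(k <- above) (f k + b - (k + a)) + N * a.
Proof.
have total : \sum_(0 <= k < N) (k + a) <= \sum_(0 <= k < N) (f k + b) + N * a.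
  rewrite !big_split /= sum_nat_const_nat subn0 leq_add2r.
  by apply: leq_trans (sum_iota_le_sum_inj N greedy_inj) (leq_addr _ _).
have split_above : \sum_(k <- above) (f k + b) =
    \sum_(k <- above) (k + a) + \sum_(k <- above) (f k + b - (k + a)).
  rewrite -big_split /=; apply: eq_big_seq => k.
  by rewrite mem_above => /andP[_ ?]; lia.
have split_below : \sum_(k <- below) (k + a) =
    \sum_(k <- below) (f k + b) + \sum_(k <- below) (k + a - (f k + b)).
  rewrite -big_split /=; apply: eq_big_seq => k.
  by rewrite mem_below => /andP[_ ?]; lia.
by rewrite !sum_above_below in total; lia.
Qed.

End MissingDiagonal.

Lemma greedy_diag_surj a b : exists j, f j + b = j + a.
Proof.
apply: NNPP => missing.
have diag_missing k : f k + b != k + a by apply/eqP => eq_k; apply: missing; exists k.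
(* With K := b (2N + b) + N a the bounds give N^2 <= 2N + 8K, false for this N. *)
pose N := 30 * (a + b + 1).
have := sqr_add_le_bin2 (size (above a b N)) (size (below a b N)).
rewrite (size_above_below diag_missing).
have := bin2_size_above a b N; have := bin2_size_below a b N.
have := sum_excess_above diag_missing N; have := sum_deficit_below diag_missing N.
rewrite /N; nia.
Qed.

Lemma greedy_bij : bijective f.
Proof. exact: inj_surj_bijective greedy_inj greedy_surj. Qed.

Lemma greedy_diag_bij (z : int) : exists! j, ((f j)%:Z - j%:Z)%R = z.
Proof.
have [j fj] : exists j, ((f j)%:Z - j%:Z)%R = z.
  case: z => n.
  - by have [j ?] := greedy_diag_surj n 0; exists j; lia.
  - by have [j ?] := greedy_diag_surj 0 n.+1; exists j; rewrite NegzE; lia.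
by exists j; split=> // i fi; apply: greedy_diag_inj; lia.
Qed.

End GreedyPermutation.

Lemma has_notin_iota_size (s : seq nat) :
  has (fun m => m \notin s) (iota 0 (size s).+1).
Proof.
apply/negPn/negP => /hasPn covered.
have : size (iota 0 (size s).+1) <= size s.
  by apply: uniq_leq_size (iota_uniq _ _) _ => x /covered /negbNE.
by rewrite size_iota ltnn.
Qed.

Lemma mex_notin s : mex s \notin s.
Proof.
have := nth_find 0 (has_notin_iota_size s).
by rewrite nth_iota // -[X in _ < X](size_iota 0) -has_find has_notin_iota_size.
Qed.

Lemma mem_lt_mex s x : x < mex s -> x \in s.
Proof.
move=> lt_x_mex; have := before_find 0 lt_x_mex.
have := has_notin_iota_size s; rewrite has_find size_iota => mex_le.
by rewrite nth_iota ?add0n ?(ltn_trans lt_x_mex) // => /negbFE.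
Qed.

Lemma row_prefixE prev n : row_prefix prev n = [seq new_row prev k | k <- iota 0 n].
Proof.
elim: n => // n IH.
rewrite [LHS]/= -/(row_prefix prev n) IH -addn1 iotaD map_cat cats1; congr rcons.
by rewrite /new_row /= -/(row_prefix prev n) IH nth_rcons size_map size_iota ltnn eqxx.
Qed.

Lemma new_rowE prev j :
  new_row prev j = mex (cands prev [seq new_row prev k | k <- iota 0 j] j).
Proof. by rewrite {1}/new_row /= row_prefixE nth_rcons size_map size_iota ltnn eqxx. Qed.

Lemma mem_cands prev (r : nat -> nat) j x :
  (x \in cands prev [seq r k | k <- iota 0 j] j) =
  has (fun p => has (fun k => x + p k == r k + p j) (iota 0 j)) prev.
Proof.
have -> : (x \in cands prev [seq r k | k <- iota 0 j] j) =
          (Posz x \in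
             [seq ((nth 0%N [seq r k | k <- iota 0 j] k)%:Z + (p j)%:Z - (p k)%:Z)%R
             | p <- prev, k <- iota 0 j]).
  apply/mapP/idP => [[v] | x_in]; last by exists (Posz x); rewrite ?mem_filter.
  by rewrite mem_filter => /andP[/gez0_abs <- ?] ->.
elim: prev => //= p prev IH; rewrite mem_cat IH -has_pred1 has_map; congr (_ || _).
apply: eq_in_has => k; rewrite mem_iota /= => lt_k_j.
rewrite add0n in lt_k_j; rewrite (nth_map 0) ?size_iota // nth_iota // add0n.
apply/eqP/eqP; lia.
Qed.

Lemma new_row_fresh prev j k : k < j ->
  ~~ has (fun p => new_row prev j + p k == new_row prev k + p j) prev.
Proof.
move=> lt_kj.
apply: contra (mex_notin (cands prev [seq new_row prev k | k <- iota 0 j] j)).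
rewrite -new_rowE mem_cands.
by apply: sub_has => p eq_jk; apply/hasP; exists k; rewrite ?mem_iota.
Qed.

Lemma new_row_least prev j v : v < new_row prev j ->
  has (fun p => has (fun k => v + p k == new_row prev k + p j) (iota 0 j)) prev.
Proof. by rewrite new_rowE => /mem_lt_mex; rewrite mem_cands. Qed.

Definition row0 := new_row [::].
Definition row1 := new_row [:: row0].

Lemma row0E j : row0 j = 0.
Proof. by case: (posnP (row0 j)) => // /new_row_least. Qed.

Lemma row1E j : row1 j = j.
Proof.
elim/ltn_ind: j => j IH.
case: (ltngtP (row1 j) j) => [lt_j | gt_j | //].
- have := new_row_fresh [:: row0] lt_j.
  by rewrite /= -/row1 orbF !row0E (IH _ lt_j) eqxx.
- have /= := new_row_least gt_j; rewrite -/row1 orbF => /hasP[k].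
  rewrite mem_iota !row0E !addn0 => /andP[_ lt_kj].
  by rewrite (IH k lt_kj) => /eqP eq_jk; rewrite eq_jk ltnn in lt_kj.
Qed.

Lemma qseqE j : qseq j = new_row [:: row0; row1] j.
Proof. by []. Qed.

Lemma qseq_fresh j k : k < j -> qseq j <> qseq k /\ qseq j + k <> qseq k + j.
Proof.
move=> lt_kj; have := new_row_fresh [:: row0; row1] lt_kj.
by rewrite /= -!qseqE !row0E !row1E !addn0 orbF negb_or => /andP[/eqP ? /eqP ?].
Qed.

Lemma qseq_least j v : v < qseq j ->
  exists2 k, k < j & v = qseq k \/ v + k = qseq k + j.
Proof.
move/new_row_least; rewrite /= -/row0 -/row1 orbF.
case/orP => /hasP[k]; rewrite mem_iota -!qseqE ?row0E ?row1E ?addn0;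
  move=> /andP[_ lt_kj] /eqP eq_v; exists k => //; by [left | right].
Qed.

Theorem theorem5p1 :
  bijective qseq /\
  (forall z : int, exists! j : nat, ((qseq j)%:Z - j%:Z)%R = z).
Proof.
split; first exact: greedy_bij qseq_fresh qseq_least.
exact: greedy_diag_bij qseq_fresh qseq_least.
Qed.
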